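(* Let $W$ be a positive word such that $W\doteq\Delta V$ for some positive word $V$. Then every node of the diagram $D(W)$ is incident with an edge labelled $\sigma_i$ for each $i=1,\dots,n-1$; that is, for every node $P$ of $D(W)$ and every $i$, either $P\sigma_i$ is a node of $D(W)$, or $P\doteq P'\sigma_i$ for some node $P'$ of $D(W)$.
   Context: Fix $n\ge 2$. $SB_n^+$ is the monoid with generators $\sigma_1,\dots,\sigma_{n-1},x_1,\dots,x_{n-1}$ and relations: $\sigma_i\sigma_j=\sigma_j\sigma_i$ and $x_ix_j=x_jx_i$ if $|i-j|>1$; $x_i\sigma_j=\sigma_jx_i$ if $|i-j|\ne 1$; $\sigma_i\sigma_{i+1}\sigma_i=\sigma_{i+1}\sigma_i\sigma_{i+1}$; $\sigma_i\sigma_{i+1}x_i=x_{i+1}\sigma_i\sigma_{i+1}$; $\sigma_{i+1}\sigma_ix_{i+1}=x_i\sigma_{i+1}\sigma_i$. Positive words are words in $\sigma_i,x_i$; $A\doteq B$ means equality in $SB_n^+$. $\Delta\equiv\sigma_1\cdots\sigma_{n-1}\,\sigma_1\cdots\sigma_{n-2}\cdots\sigma_1\sigma_2\,\sigma_1$. The (Cayley) diagram $D(W)$ of a positive word $W$ (Garside's diagram): its nodes are the elements $P$ of $SB_n^+$ that are left divisors of $W$ (i.e. $W\doteq PQ$ for some positive $Q$), including the empty word; for a generator $g\in\{\sigma_i,x_i\}$ there is a directed edge labelled $g$ from node $P$ to node $P'$ whenever $P'\doteq Pg$. *)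

(* the positive singular braid monoid SB_n^+ as the quotient of
   the free monoid on sigma_1..sigma_{n-1}, x_1..x_{n-1} by the congruence
   generated by the defining relations. *)
From Stdlib Require Import Arith List Lia.
Import ListNotations.

Inductive gen : Type := Sg (i : nat) | Xg (i : nat).

Definition gidx (g : gen) : nat := match g with Sg i => i | Xg i => i end.

Definition valid_gen (n : nat) (g : gen) : Prop := 1 <= gidx g /\ gidx g <= n - 1.

Definition word := list gen.
Definition positive_word (n : nat) (w : word) : Prop := Forall (valid_gen n) w.

Inductive sb_rel (n : nat) : word -> word -> Prop :=
| rel_ss : forall i j, 1 <= i <= n - 1 -> 1 <= j <= n - 1 -> i + 1 < j \/ j + 1 < i ->
    sb_rel n [Sg i; Sg j] [Sg j; Sg i]
| rel_xx : forall i j, 1 <= i <= n - 1 -> 1 <= j <= n - 1 -> i + 1 < j \/ j + 1 < i ->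
    sb_rel n [Xg i; Xg j] [Xg j; Xg i]
| rel_xs : forall i j, 1 <= i <= n - 1 -> 1 <= j <= n - 1 -> i <> j + 1 -> j <> i + 1 ->
    sb_rel n [Xg i; Sg j] [Sg j; Xg i]
| rel_sss : forall i, 1 <= i -> i + 1 <= n - 1 ->
    sb_rel n [Sg i; Sg (i+1); Sg i] [Sg (i+1); Sg i; Sg (i+1)]
| rel_ssx : forall i, 1 <= i -> i + 1 <= n - 1 ->
    sb_rel n [Sg i; Sg (i+1); Xg i] [Xg (i+1); Sg i; Sg (i+1)]
| rel_ssx' : forall i, 1 <= i -> i + 1 <= n - 1 ->
    sb_rel n [Sg (i+1); Sg i; Xg (i+1)] [Xg i; Sg (i+1); Sg i].

(* A ≐ B : equality in SB_n^+ (congruence generated by sb_rel) *)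
Inductive sb_eq (n : nat) : word -> word -> Prop :=
| sb_refl : forall w, sb_eq n w w
| sb_sym : forall u v, sb_eq n u v -> sb_eq n v u
| sb_trans : forall u v w, sb_eq n u v -> sb_eq n v w -> sb_eq n u w
| sb_step : forall A L R B, sb_rel n L R -> sb_eq n (A ++ L ++ B) (A ++ R ++ B).

(* Garside element Delta = s1..s_{n-1} s1..s_{n-2} ... s1 s2 s1 *)
Definition Delta (n : nat) : word :=
  flat_map (fun k => map Sg (seq 1 (n - 1 - k))) (seq 0 (n - 1)).

(* P is a node of the diagram D(W): a (positive word representing a) left
   divisor of W in SB_n^+ *)
Definition node (n : nat) (W P : word) : Prop :=
  positive_word n P /\ exists Q, positive_word n Q /\ sb_eq n W (P ++ Q).

(* SB_n^+ is a complemented monoid in Dehornoy's sense: for distinct generators a, b at most one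
   defining relation has the form a u = b v, and the cube condition holds for every triple of
   generators (it only depends on how the three indices compare, so it is a finite check, done by
   computation).  By induction on length, a X = b Y then forces either a = b and X = Y, or X = u Z
   and Y = v Z for that relation a u = b v; in particular SB_n^+ is left cancellative.

   Now let W = P Q, where every sigma_i left-divides W, as Delta does.  Induction on the length of P
   shows that sigma_i left-divides Q or right-divides P.  For P = P0 g, the hypothesis for P0 either
   moves sigma_i past g into Q, or gives P0 = P1 sigma_i; then either g commutes with sigma_i, or
   g is sigma_j or x_j with |i - j| = 1, and the hypothesis for P1 and sigma_j together with
   sigma_j sigma_i sigma_j = sigma_i sigma_j sigma_i and sigma_j sigma_i x_j = x_i sigma_j sigma_i
   concludes. *)

From Stdlib Require Import Arith List Lia Bool Setoid Morphisms.
Import ListNotations.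

#[export] Instance sb_eq_equiv n : Equivalence (sb_eq n).
Proof. split; [exact (sb_refl n) | exact (sb_sym n) | exact (sb_trans n)]. Qed.

Lemma sb_eq_app_l n w u v : sb_eq n u v -> sb_eq n (w ++ u) (w ++ v).
Proof.
  induction 1 as [| |u v x _ IH1 _ IH2|A L R B HLR]; [reflexivity | symmetry; auto | |].
  - rewrite IH1. exact IH2.
  - rewrite !(app_assoc w A). apply sb_step, HLR.
Qed.

Lemma sb_eq_app_r n w u v : sb_eq n u v -> sb_eq n (u ++ w) (v ++ w).
Proof.
  induction 1 as [| |u v x _ IH1 _ IH2|A L R B HLR]; [reflexivity | symmetry; auto | |].
  - rewrite IH1. exact IH2.
  - rewrite <- !app_assoc. apply sb_step, HLR.
Qed.

#[export] Instance app_sb_eq_proper n : Proper (sb_eq n ==> sb_eq n ==> sb_eq n) (@app gen).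
Proof. intros u u' Hu v v' Hv. rewrite (sb_eq_app_r n v _ _ Hu). apply sb_eq_app_l, Hv. Qed.

#[export] Instance cons_sb_eq_proper n : Proper (eq ==> sb_eq n ==> sb_eq n) (@cons gen).
Proof. intros a _ <- u v H. exact (sb_eq_app_l n [a] _ _ H). Qed.

Lemma sb_rel_eq n L R : sb_rel n L R -> sb_eq n L R.
Proof. intro H. rewrite <- (app_nil_r L), <- (app_nil_r R). exact (sb_step n [] L R [] H). Qed.

Lemma sb_eq_length n u v : sb_eq n u v -> length u = length v.
Proof.
  induction 1 as [| | |A L R B HLR]; try congruence.
  rewrite !length_app. destruct HLR; reflexivity.
Qed.

Lemma sb_eq_positive n u v : sb_eq n u v -> positive_word n u <-> positive_word n v.
Proof.
  induction 1 as [| | |A L R B HLR]; try tauto.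
  assert (positive_word n L /\ positive_word n R) as [HL HR]
    by (unfold positive_word, valid_gen; destruct HLR; split; repeat constructor; simpl; lia).
  unfold positive_word in *. rewrite !Forall_app. tauto.
Qed.

(** * Complements and subword reversing *)

Inductive code := CEq | CSucc | CPred | CFar.

Definition code_of (i j : nat) : code :=
  if i =? j then CEq else if i + 1 =? j then CSucc else if j + 1 =? i then CPred else CFar.

Definition validb (n i : nat) : bool := (1 <=? i) && (i <=? n - 1).

Definition flip (c : code) : code := match c with CSucc => CPred | CPred => CSucc | c => c end.

Section Complement.
Variables (R : nat -> nat -> code) (V : nat -> bool).

Definition same (a b : gen) : bool :=
  match a, b with
  | Sg i, Sg j | Xg i, Xg j => match R i j with CEq => true | _ => false end
  | _, _ => false
  end.

(* [compl R V a b = Some (u, v)] when [a u = b v] is the defining relation between [a] and [b].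
   [R] tells how two indices compare and [V] which indices are valid, so that the same code
   also runs on symbolic indices (see [cube_holds]). *)
Definition compl (a b : gen) : option (word * word) :=
  if V (gidx a) && V (gidx b) then
    match a, b with
    | Sg i, Sg j =>
        match R i j with CEq => None | CFar => Some ([b], [a]) | _ => Some ([b; a], [a; b]) end
    | Xg i, Xg j => match R i j with CFar => Some ([b], [a]) | _ => None end
    | Xg i, Sg j =>
        match R i j with CSucc | CPred => Some ([b; Sg i], [Sg i; Xg j]) | _ => Some ([b], [a]) end
    | Sg i, Xg j =>
        match R i j with CSucc | CPred => Some ([Sg j; Xg i], [a; Sg j]) | _ => Some ([b], [a]) end
    end
  else None.

Inductive reversal := Reversed (p q : word) | Stuck | OutOfFuel.

(* Dehornoy's right reversing of [p^-1 q], bounded by [fuel]. *)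
Fixpoint reverse (fuel : nat) (p q : word) : reversal :=
  match p, q with
  | [], _ => Reversed q []
  | _, [] => Reversed [] p
  | a :: p1, b :: q1 =>
    match fuel with
    | 0 => OutOfFuel
    | S fuel =>
      if same a b then reverse fuel p1 q1 else
      match compl a b with
      | None => Stuck
      | Some (u, v) =>
        match reverse fuel p1 u with
        | Reversed p2 u1 =>
          match reverse fuel q1 v with
          | Reversed q2 v1 =>
            match reverse fuel u1 v1 with
            | Reversed u2 v2 => Reversed (p2 ++ u2) (q2 ++ v2)
            | e => e
            end
          | e => e
          end
        | e => e
        end
      end
    end
  end.

(* The cube condition at [a], [b], [c]: the common multiple of [a u1 = b v1] and [b u2 = c v2]
   found by reversing, if there is one, must factor through the complement of [a] and [c]. *)
Definition cube (a b c : gen) : bool :=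
  same a b || same b c || same a c ||
  match compl a b, compl b c with
  | Some (u1, v1), Some (u2, v2) =>
    match reverse 4 v1 u2 with
    | Stuck => true
    | OutOfFuel => false
    | Reversed p q =>
      match compl a c with
      | None => false
      | Some (u3, v3) =>
        match reverse 4 u3 (u1 ++ p), reverse 4 v3 (v2 ++ q) with
        | Reversed r [], Reversed r' [] =>
            match reverse 4 r r' with Reversed [] [] => true | _ => false end
        | _, _ => false
        end
      end
    end
  | _, _ => true
  end.

End Complement.

Notation sb_same := (same code_of).
Notation sb_compl n := (compl code_of (validb n)).
Notation sb_reverse n := (reverse code_of (validb n)).

Inductive code_spec (i j : nat) : code -> Prop :=
| CodeEq : i = j -> code_spec i j CEq
| CodeSucc : i + 1 = j -> code_spec i j CSucc
| CodePred : j + 1 = i -> code_spec i j CPred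
| CodeFar : i <> j -> i + 1 <> j -> j + 1 <> i -> code_spec i j CFar.

Lemma code_ofP i j : code_spec i j (code_of i j).
Proof.
  unfold code_of.
  destruct (Nat.eqb_spec i j); [now constructor|].
  destruct (Nat.eqb_spec (i + 1) j); [now constructor|].
  destruct (Nat.eqb_spec (j + 1) i); now constructor.
Qed.

Lemma code_of_refl i : code_of i i = CEq.
Proof. destruct (code_ofP i i); auto; lia. Qed.

Lemma code_of_flip i j : code_of j i = flip (code_of i j).
Proof. destruct (code_ofP i j), (code_ofP j i); simpl; auto; lia. Qed.

Lemma validbP n i : reflect (1 <= i <= n - 1) (validb n i).
Proof.
  unfold validb. apply iff_reflect. rewrite andb_true_iff, !Nat.leb_le. lia.
Qed.

Ltac case_indices := repeat match goal with
  | |- context [code_of ?x ?y] => destruct (code_ofP x y); try (exfalso; lia)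
  | H : context [code_of ?x ?y] |- _ => destruct (code_ofP x y); try (exfalso; lia)
  | |- context [validb ?n ?x] => destruct (validbP n x); try (exfalso; lia)
  | H : context [validb ?n ?x] |- _ => destruct (validbP n x); try (exfalso; lia)
  end.

Ltac apply_sb_rel := first
  [ apply rel_ss | apply rel_xx | apply rel_xs | apply rel_sss | apply rel_ssx | apply rel_ssx' ];
  lia.

Lemma sameP a b : reflect (a = b) (sb_same a b).
Proof.
  apply iff_reflect.
  destruct a as [i|i], b as [j|j]; simpl; case_indices;
    split; intro E; first [congruence | injection E; lia].
Qed.

Lemma compl_diag n a : sb_compl n a a = None.
Proof.
  unfold compl. destruct a as [i|i]; simpl; rewrite code_of_refl;
    destruct (validb n i); reflexivity.
Qed.

Lemma compl_sound n a b u v : sb_compl n a b = Some (u, v) -> sb_eq n (a :: u) (b :: v).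
Proof.
  unfold compl. destruct a as [i|i], b as [j|j]; simpl; case_indices; intro Hc;
    try discriminate; injection Hc as <- <-; subst;
    first [ apply sb_rel_eq; apply_sb_rel | symmetry; apply sb_rel_eq; apply_sb_rel ].
Qed.

Lemma compl_swap n a b u v : sb_compl n a b = Some (u, v) -> sb_compl n b a = Some (v, u).
Proof.
  unfold compl. destruct a as [i|i], b as [j|j]; simpl; case_indices; intro Hc;
    try discriminate; injection Hc as <- <-; reflexivity.
Qed.

Lemma compl_of_sb_rel n L R : sb_rel n L R ->
  exists a b L' R', L = a :: L' /\ R = b :: R' /\ sb_compl n a b = Some (L', R').
Proof.
  destruct 1; do 4 eexists; (split; [reflexivity | split; [reflexivity|]]);
    unfold compl; simpl; case_indices; reflexivity.
Qed.

Lemma compl_sigma_head n g i u v : sb_compl n g (Sg i) = Some (u, v) -> exists u', u = Sg i :: u'.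
Proof.
  unfold compl. destruct g as [j|j]; simpl; case_indices; intro Hc;
    try discriminate; injection Hc as <- <-; eexists; reflexivity.
Qed.

Lemma reverse_sound n fuel : forall p q p' q',
  sb_reverse n fuel p q = Reversed p' q' -> sb_eq n (p ++ p') (q ++ q').
Proof.
  induction fuel as [|fuel IH]; intros [|a p] [|b q] p' q' H; simpl in H;
    try (injection H as <- <-; rewrite ?app_nil_r; reflexivity); try discriminate.
  destruct (sameP a b) as [<-|_].
  { simpl. rewrite (IH _ _ _ _ H). reflexivity. }
  destruct (sb_compl n a b) as [[u v]|] eqn:Ec; [|discriminate].
  destruct (sb_reverse n fuel p u) as [p2 u1| |] eqn:E1; try discriminate.
  destruct (sb_reverse n fuel q v) as [q2 v1| |] eqn:E2; try discriminate.
  destruct (sb_reverse n fuel u1 v1) as [u2 v2| |] eqn:E3; try discriminate.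
  injection H as <- <-. apply IH in E1, E2, E3. apply compl_sound in Ec.
  transitivity ((a :: u) ++ v1 ++ v2).
  - simpl. rewrite app_assoc, E1, <- app_assoc, E3. reflexivity.
  - rewrite Ec. simpl. rewrite app_assoc, <- E2, <- app_assoc. reflexivity.
Qed.

(** * The cube condition *)

(* Whether [cube] holds at generators with indices [i], [j], [k] depends only on how the indices
   compare pairwise and on which are valid.  [code3] realizes a comparison pattern on the symbolic
   indices 0, 1, 2, and the table covers every pattern realized by some [i], [j], [k] < 7. *)
Definition pick3 {A} (a0 a1 a2 : A) (x : nat) : A :=
  match x with 0 => a0 | 1 => a1 | _ => a2 end.

Definition code3 (c01 c12 c02 : code) (x y : nat) : code :=
  match x, y with
  | 0, 1 => c01 | 1, 0 => flip c01
  | 1, S (S _) => c12 | S (S _), 1 => flip c12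
  | 0, S (S _) => c02 | S (S _), 0 => flip c02
  | _, _ => CEq
  end.

Definition codes := [CEq; CSucc; CPred; CFar].

Definition code_eqb (c d : code) : bool :=
  match c, d with CEq, CEq | CSucc, CSucc | CPred, CPred | CFar, CFar => true | _, _ => false end.

Definition realizable (c01 c12 c02 : code) : bool :=
  existsb (fun i => existsb (fun j => existsb (fun k =>
    code_eqb (code_of i j) c01 && code_eqb (code_of j k) c12 && code_eqb (code_of i k) c02)
    (seq 0 7)) (seq 0 7)) (seq 0 7).

Definition cube_instance c01 c12 c02 v0 v1 v2 a b c : bool :=
  negb (realizable c01 c12 c02) || cube (code3 c01 c12 c02) (pick3 v0 v1 v2) a b c.

Lemma cube_table :
  forallb (fun c01 => forallb (fun c12 => forallb (fun c02 =>
  forallb (fun v0 => forallb (fun v1 => forallb (fun v2 =>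
  forallb (fun a => forallb (fun b => forallb (fun c =>
    cube_instance c01 c12 c02 v0 v1 v2 a b c)
  [Sg 2; Xg 2]) [Sg 1; Xg 1]) [Sg 0; Xg 0])
  [true; false]) [true; false]) [true; false]) codes) codes) codes = true.
Proof. vm_compute. reflexivity. Qed.

Definition map_gen (f : nat -> nat) (g : gen) : gen :=
  match g with Sg i => Sg (f i) | Xg i => Xg (f i) end.

Definition map_reversal (f : nat -> nat) (r : reversal) : reversal :=
  match r with
  | Reversed p q => Reversed (map (map_gen f) p) (map (map_gen f) q)
  | Stuck => Stuck
  | OutOfFuel => OutOfFuel
  end.

Section Relabelling.
Variables (n : nat) (f : nat -> nat) (R : nat -> nat -> code) (V : nat -> bool).
Hypothesis R_code_of : forall x y, R x y = code_of (f x) (f y).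
Hypothesis V_validb : forall x, V x = validb n (f x).

Lemma same_map a b : sb_same (map_gen f a) (map_gen f b) = same R a b.
Proof. destruct a, b; simpl; rewrite ?R_code_of; reflexivity. Qed.

Lemma compl_map a b : sb_compl n (map_gen f a) (map_gen f b) =
  option_map (fun '(u, v) => (map (map_gen f) u, map (map_gen f) v)) (compl R V a b).
Proof.
  unfold compl. destruct a, b; simpl; rewrite !V_validb; destruct (_ && _); try reflexivity;
    rewrite R_code_of; destruct (code_of _ _); reflexivity.
Qed.

Lemma reverse_map fuel p q :
  sb_reverse n fuel (map (map_gen f) p) (map (map_gen f) q) = map_reversal f (reverse R V fuel p q).
Proof.
  revert p q; induction fuel as [|fuel IH]; intros [|a p] [|b q]; try reflexivity.
  simpl. rewrite same_map. destruct (same R a b); [apply IH|].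
  rewrite compl_map. destruct (compl R V a b) as [[u v]|]; [simpl|reflexivity].
  rewrite IH. destruct (reverse R V fuel p u) as [p2 u1| |]; try reflexivity. simpl.
  rewrite IH. destruct (reverse R V fuel q v) as [q2 v1| |]; try reflexivity. simpl.
  rewrite IH. destruct (reverse R V fuel u1 v1) as [u2 v2| |]; try reflexivity. simpl.
  rewrite !map_app. reflexivity.
Qed.

Lemma cube_map a b c :
  cube code_of (validb n) (map_gen f a) (map_gen f b) (map_gen f c) = cube R V a b c.
Proof.
  unfold cube. rewrite !same_map, !compl_map.
  destruct (same R a b || same R b c || same R a c); [reflexivity|].
  destruct (compl R V a b) as [[u1 v1]|]; [|reflexivity].
  destruct (compl R V b c) as [[u2 v2]|]; [|reflexivity]. cbn [option_map].
  rewrite reverse_map.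
  destruct (reverse R V 4 v1 u2) as [p q| |]; cbn [map_reversal]; [|reflexivity..].
  destruct (compl R V a c) as [[u3 v3]|]; cbn [option_map]; [|reflexivity].
  rewrite <- !map_app, !reverse_map.
  destruct (reverse R V 4 u3 (u1 ++ p)) as [r [|x e]| |]; cbn [map_reversal map];
    [|reflexivity..].
  destruct (reverse R V 4 v3 (v2 ++ q)) as [r' [|x e']| |]; cbn [map_reversal map];
    [|reflexivity..].
  rewrite reverse_map.
  destruct (reverse R V 4 r r') as [[|x p'] [|y q']| |]; reflexivity.
Qed.

End Relabelling.

Lemma forallb_at {A} (P : A -> bool) l x : forallb P l = true -> In x l -> P x = true.
Proof. rewrite forallb_forall. auto. Qed.

Lemma cube_from_table c01 c12 c02 v0 v1 v2 a b c :
  realizable c01 c12 c02 = true ->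
  In a [Sg 0; Xg 0] -> In b [Sg 1; Xg 1] -> In c [Sg 2; Xg 2] ->
  cube (code3 c01 c12 c02) (pick3 v0 v1 v2) a b c = true.
Proof.
  intros Hr Ha Hb Hc.
  assert (Hcode : forall c, In c codes) by (intros []; simpl; tauto).
  assert (Hbool : forall v : bool, In v [true; false]) by (intros []; simpl; tauto).
  pose proof (forallb_at _ _ c01 cube_table (Hcode _)) as H.
  apply (forallb_at _ _ c12) in H; [|apply Hcode].
  apply (forallb_at _ _ c02) in H; [|apply Hcode].
  apply (forallb_at _ _ v0) in H; [|apply Hbool].
  apply (forallb_at _ _ v1) in H; [|apply Hbool].
  apply (forallb_at _ _ v2) in H; [|apply Hbool].
  apply (forallb_at _ _ a) in H; [|exact Ha].
  apply (forallb_at _ _ b) in H; [|exact Hb].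
  apply (forallb_at _ _ c) in H; [|exact Hc].
  unfold cube_instance in H. rewrite Hr in H. exact H.
Qed.

Lemma realizable_code_of i j k : realizable (code_of i j) (code_of j k) (code_of i k) = true.
Proof.
  destruct (code_ofP i j), (code_ofP j k), (code_ofP i k); try lia; vm_compute; reflexivity.
Qed.

Definition shape (g : gen) (x : nat) : gen := match g with Sg _ => Sg x | Xg _ => Xg x end.

Lemma cube_holds n a b c : cube code_of (validb n) a b c = true.
Proof.
  pose (f := pick3 (gidx a) (gidx b) (gidx c)).
  assert (HR : forall x y, code3 (code_of (gidx a) (gidx b)) (code_of (gidx b) (gidx c))
                 (code_of (gidx a) (gidx c)) x y = code_of (f x) (f y)).
  { intros [|[|x]] [|[|y]]; cbn;
      first [reflexivity | symmetry; apply code_of_refl | symmetry; apply code_of_flip]. }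
  assert (HV : forall x, pick3 (validb n (gidx a)) (validb n (gidx b)) (validb n (gidx c)) x
                 = validb n (f x)) by (intros [|[|x]]; reflexivity).
  replace a with (map_gen f (shape a 0)) by (destruct a; reflexivity).
  replace b with (map_gen f (shape b 1)) by (destruct b; reflexivity).
  replace c with (map_gen f (shape c 2)) by (destruct c; reflexivity).
  rewrite (cube_map n f _ _ HR HV).
  apply cube_from_table; [apply realizable_code_of | destruct a | destruct b | destruct c];
    simpl; auto.
Qed.

(** * Left cancellativity and common multiples *)

Definition lcm_split n a b X Y : Prop :=
  (a = b /\ sb_eq n X Y) \/
  exists u v Z, sb_compl n a b = Some (u, v) /\ sb_eq n X (u ++ Z) /\ sb_eq n Y (v ++ Z).

Definition splits_below n m : Prop :=
  forall a b X Y, length (a :: X) <= m -> sb_eq n (a :: X) (b :: Y) -> lcm_split n a b X Y.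

Definition reversal_spec n X Y (r : reversal) : Prop :=
  match r with
  | Reversed p q => exists T, sb_eq n X (p ++ T) /\ sb_eq n Y (q ++ T)
  | Stuck => False
  | OutOfFuel => True
  end.

Lemma lcm_split_sym n a b X Y : lcm_split n a b X Y -> lcm_split n b a Y X.
Proof.
  intros [[<- E]|[u [v [Z [Ec [E1 E2]]]]]].
  - left. split; [reflexivity | symmetry; exact E].
  - right. exists v, u, Z. auto using compl_swap.
Qed.

Definition heads_split n (u v : word) : Prop :=
  match u, v with a :: X, b :: Y => lcm_split n a b X Y | _, _ => False end.

Section BelowLength.
Variables (n m : nat).
Hypothesis split_m : splits_below n m.

Lemma cancel_below w X Y :
  length (w ++ X) <= m -> sb_eq n (w ++ X) (w ++ Y) -> sb_eq n X Y.
Proof.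
  induction w as [|a w IH]; intros Hl He; [exact He|].
  destruct (split_m a a _ _ Hl He) as [[_ E]|[u [v [Z [Ec _]]]]].
  - apply IH; [simpl in Hl; lia | exact E].
  - rewrite compl_diag in Ec. discriminate.
Qed.

Lemma reverse_complete fuel : forall p q X Y,
  length (p ++ X) <= m -> sb_eq n (p ++ X) (q ++ Y) -> reversal_spec n X Y (sb_reverse n fuel p q).
Proof.
  induction fuel as [|fuel IH]; intros [|a p] [|b q] X Y Hl He; cbn [app length] in Hl, He; simpl.
  all: try (exists Y; split; [exact He | reflexivity]).
  all: try (exists X; split; [reflexivity | symmetry; exact He]).
  all: try exact I.
  pose proof (sb_eq_length _ _ _ He) as Hlen. cbn [length] in Hlen.
  destruct (split_m a b _ _ Hl He) as [[<- E]|[u [v [Z [Ec [E1 E2]]]]]].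
  { destruct (sameP a a) as [_|]; [|congruence]. apply IH; [lia | exact E]. }
  destruct (sameP a b) as [<-|_]; [rewrite compl_diag in Ec; discriminate|].
  rewrite Ec.
  pose proof (sb_eq_length _ _ _ E1) as L1. pose proof (sb_eq_length _ _ _ E2) as L2.
  rewrite !length_app in Hl; rewrite !length_app in Hlen, L1, L2.
  assert (G1 := IH p u X Z ltac:(rewrite length_app; lia) E1).
  destruct (sb_reverse n fuel p u) as [p2 u1| |]; [|contradiction|exact I].
  assert (G2 := IH q v Y Z ltac:(rewrite length_app; lia) E2).
  destruct (sb_reverse n fuel q v) as [q2 v1| |]; [|contradiction|exact I].
  destruct G1 as [T1 [F1 F2]], G2 as [T2 [F3 F4]].
  pose proof (sb_eq_length _ _ _ F2) as L3. rewrite !length_app in L3.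
  assert (G3 := IH u1 v1 T1 T2 ltac:(rewrite length_app; lia)
                  ltac:(rewrite <- F2, <- F4; reflexivity)).
  destruct (sb_reverse n fuel u1 v1) as [u2 v2| |]; [|contradiction|exact I].
  destruct G3 as [T [F5 F6]]. exists T. split.
  - rewrite F1, F5, app_assoc. reflexivity.
  - rewrite F3, F6, app_assoc. reflexivity.
Qed.

Lemma lcm_split_cube a b c u1 v1 u2 v2 Z1 Z2 :
  a <> c -> sb_compl n a b = Some (u1, v1) -> sb_compl n b c = Some (u2, v2) ->
  length (v1 ++ Z1) <= m -> sb_eq n (v1 ++ Z1) (u2 ++ Z2) ->
  exists u3 v3 T, sb_compl n a c = Some (u3, v3) /\
    sb_eq n (u1 ++ Z1) (u3 ++ T) /\ sb_eq n (v2 ++ Z2) (v3 ++ T).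
Proof.
  intros Hac Ec1 Ec2 Hl He.
  assert (Hc := cube_holds n a b c). unfold cube in Hc.
  destruct (sameP a b) as [<-|_]; [rewrite compl_diag in Ec1; discriminate|].
  destruct (sameP b c) as [<-|_]; [rewrite compl_diag in Ec2; discriminate|].
  destruct (sameP a c) as [|_]; [contradiction|].
  rewrite Ec1, Ec2 in Hc. cbn [orb] in Hc.
  assert (G := reverse_complete 4 v1 u2 Z1 Z2 Hl He).
  destruct (sb_reverse n 4 v1 u2) as [p q| |]; [|contradiction|discriminate].
  destruct G as [T [F1 F2]].
  destruct (sb_compl n a c) as [[u3 v3]|]; [|discriminate].
  destruct (sb_reverse n 4 u3 (u1 ++ p)) as [r [|]| |] eqn:R1; try discriminate.
  destruct (sb_reverse n 4 v3 (v2 ++ q)) as [r' [|]| |] eqn:R2; try discriminate.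
  destruct (sb_reverse n 4 r r') as [[|] [|]| |] eqn:R3; try discriminate.
  apply reverse_sound in R1, R2, R3. rewrite app_nil_r in R1, R2. rewrite !app_nil_r in R3.
  exists u3, v3, (r ++ T). split; [reflexivity | split].
  - rewrite F1, app_assoc, <- R1, app_assoc. reflexivity.
  - rewrite F2, app_assoc, <- R2, <- R3, app_assoc. reflexivity.
Qed.

Lemma lcm_split_trans a b c X Y Z : length Y <= m ->
  lcm_split n a b X Y -> lcm_split n b c Y Z -> lcm_split n a c X Z.
Proof.
  intros HY [[<- E1]|[u1 [v1 [Z1 [Ec1 [E1 E2]]]]]] C2.
  { destruct C2 as [[<- E2]|[u [v [Z' [Ec [E2 E3]]]]]].
    - left. split; [reflexivity | rewrite E1; exact E2].
    - right. exists u, v, Z'. rewrite E1. auto. }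
  destruct C2 as [[<- E3]|[u2 [v2 [Z2 [Ec2 [E3 E4]]]]]].
  { right. exists u1, v1, Z1. rewrite <- E3. auto. }
  destruct (sameP a c) as [<-|Hac].
  - apply compl_swap in Ec1. rewrite Ec1 in Ec2. injection Ec2 as <- <-.
    left. split; [reflexivity|].
    assert (sb_eq n Z1 Z2) as E.
    { apply (cancel_below v1); [rewrite <- (sb_eq_length _ _ _ E2); exact HY|].
      rewrite <- E2, <- E3. reflexivity. }
    rewrite E1, E4, E. reflexivity.
  - destruct (lcm_split_cube a b c u1 v1 u2 v2 Z1 Z2 Hac Ec1 Ec2) as [u3 [v3 [T [Ec3 [F1 F2]]]]].
    + rewrite <- (sb_eq_length _ _ _ E2). exact HY.
    + rewrite <- E2, <- E3. reflexivity.
    + right. exists u3, v3, T. rewrite E1, E4. auto.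
Qed.

Lemma heads_split_of_eq u v : sb_eq n u v -> length u = S m -> heads_split n u v.
Proof.
  induction 1 as [w|u v Huv IH|u v w Huv IH1 Hvw IH2|A L R B HLR]; intro Hl.
  - destruct w as [|a X]; [discriminate|]. left. split; reflexivity.
  - pose proof (sb_eq_length _ _ _ Huv). specialize (IH ltac:(lia)).
    destruct u as [|a X], v as [|b Y]; try contradiction. apply lcm_split_sym, IH.
  - pose proof (sb_eq_length _ _ _ Huv). specialize (IH1 Hl). specialize (IH2 ltac:(lia)).
    destruct u as [|a X], v as [|b Y], w as [|c Z]; try contradiction.
    apply (lcm_split_trans a b c X Y Z); auto. simpl in *; lia.
  - destruct A as [|a A'].
    + destruct (compl_of_sb_rel n L R HLR) as [a [b [L' [R' [-> [-> Ec]]]]]].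
      right. exists L', R', B. split; [exact Ec | split; reflexivity].
    + left. split; [reflexivity|]. apply sb_step, HLR.
Qed.

End BelowLength.

Lemma splits_below_all n m : splits_below n m.
Proof.
  induction m as [|m IH]; intros a b X Y Hl He; [simpl in Hl; lia|].
  destruct (Nat.le_gt_cases (length (a :: X)) m).
  - apply IH; assumption.
  - exact (heads_split_of_eq n m IH (a :: X) (b :: Y) He ltac:(lia)).
Qed.

Lemma sb_eq_cons_inv n a b X Y : sb_eq n (a :: X) (b :: Y) -> lcm_split n a b X Y.
Proof. apply (splits_below_all n (length (a :: X))), le_n. Qed.

Lemma sb_eq_cancel_l n w X Y : sb_eq n (w ++ X) (w ++ Y) -> sb_eq n X Y.
Proof. apply (cancel_below n (length (w ++ X)) (splits_below_all n _)), le_n. Qed.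

Lemma sb_eq_cons_compl n a b u v X Y : sb_compl n a b = Some (u, v) ->
  sb_eq n (a :: X) (b :: Y) -> exists Z, sb_eq n X (u ++ Z) /\ sb_eq n Y (v ++ Z).
Proof.
  intros Ec He.
  destruct (sb_eq_cons_inv n a b X Y He) as [[<- _]|[u' [v' [Z [Ec' [E1 E2]]]]]].
  { rewrite compl_diag in Ec. discriminate. }
  rewrite Ec in Ec'. injection Ec' as <- <-. eauto.
Qed.

(** * Divisors of Delta and of its multiples *)

Definition left_divides n (a : gen) (Q : word) : Prop := exists Q', sb_eq n Q (a :: Q').
Definition right_divides n (a : gen) (P : word) : Prop := exists P', sb_eq n P (P' ++ [a]).

Fixpoint staircase (m : nat) : word :=
  match m with 0 => [] | S k => map Sg (seq 1 m) ++ staircase k end.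

Lemma Delta_staircase n : Delta n = staircase (n - 1).
Proof.
  unfold Delta.
  assert (H : forall len s, s + len = n - 1 ->
    flat_map (fun k => map Sg (seq 1 (n - 1 - k))) (seq s len) = staircase len).
  { induction len as [|len IH]; intros s Hs; [reflexivity|].
    simpl. rewrite (IH (S s)) by lia. replace (n - 1 - s) with (S len) by lia. reflexivity. }
  apply H. lia.
Qed.

Lemma commute_past n (l : word) g :
  (forall x, In x l -> sb_eq n [x; g] [g; x]) -> sb_eq n (l ++ [g]) (g :: l).
Proof.
  induction l as [|x l IH]; intro Hc; [reflexivity|].
  simpl. rewrite IH by (intros; apply Hc; right; assumption).
  change (x :: g :: l) with ([x; g] ++ l). rewrite (Hc x (or_introl eq_refl)). reflexivity.
Qed.

Lemma ascending_shift n m : forall a j, a + m <= n - 1 -> 1 <= a <= j -> j < a + m ->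
  sb_eq n (map Sg (seq a (S m)) ++ [Sg j]) (Sg (j + 1) :: map Sg (seq a (S m))).
Proof.
  induction m as [|m IH]; intros a j Hm Ha Hj; [lia|].
  change (map Sg (seq a (S (S m)))) with (Sg a :: Sg (S a) :: map Sg (seq (S (S a)) m)).
  destruct (Nat.eq_dec j a) as [->|Hja].
  - assert (Hfar : sb_eq n (map Sg (seq (S (S a)) m) ++ [Sg a]) (Sg a :: map Sg (seq (S (S a)) m))).
    { apply commute_past. intros x Hx. apply in_map_iff in Hx as [y [<- Hy]].
      apply in_seq in Hy. apply sb_rel_eq, rel_ss; lia. }
    simpl. rewrite Hfar. replace (S a) with (a + 1) by lia.
    change (Sg a :: Sg (a + 1) :: Sg a :: ?r) with ([Sg a; Sg (a + 1); Sg a] ++ r).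
    rewrite (sb_rel_eq n _ _ (rel_sss n a ltac:(lia) ltac:(lia))). reflexivity.
  - change (Sg a :: ?r) with ([Sg a] ++ r) at 1.
    rewrite <- app_assoc.
    change (Sg (S a) :: map Sg (seq (S (S a)) m)) with (map Sg (seq (S a) (S m))).
    rewrite (IH (S a) j) by lia. simpl.
    change (Sg a :: Sg (j + 1) :: ?r) with ([Sg a; Sg (j + 1)] ++ r).
    rewrite (sb_rel_eq n _ _ (rel_ss n a (j + 1) ltac:(lia) ltac:(lia) ltac:(lia))). reflexivity.
Qed.

Lemma staircase_left_divisible n m i :
  m <= n - 1 -> 1 <= i <= m -> left_divides n (Sg i) (staircase m).
Proof.
  revert i; induction m as [|m IH]; intros i Hm Hi; [lia|].
  destruct (Nat.eq_dec i 1) as [->|Hi1].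
  - exists (map Sg (seq 2 m) ++ staircase m). reflexivity.
  - destruct (IH (i - 1) ltac:(lia) ltac:(lia)) as [D HD].
    exists (map Sg (seq 1 (S m)) ++ D).
    change (staircase (S m)) with (map Sg (seq 1 (S m)) ++ staircase m). rewrite HD.
    change (Sg (i - 1) :: D) with ([Sg (i - 1)] ++ D).
    rewrite app_assoc, (ascending_shift n m 1 (i - 1)) by lia.
    replace (i - 1 + 1) with i by lia. reflexivity.
Qed.

Lemma Delta_left_divisible n i : 1 <= i <= n - 1 -> left_divides n (Sg i) (Delta n).
Proof. intro Hi. rewrite Delta_staircase. apply staircase_left_divisible; lia. Qed.

Definition adjacent (i j : nat) : Prop := i + 1 = j \/ j + 1 = i.

Lemma braid_sigma n i j : 1 <= i <= n - 1 -> 1 <= j <= n - 1 -> adjacent i j ->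
  sb_eq n [Sg j; Sg i; Sg j] [Sg i; Sg j; Sg i].
Proof.
  intros Hi Hj [<-|<-]; [symmetry|]; apply sb_rel_eq, rel_sss; lia.
Qed.

Lemma braid_sigma_x n i j : 1 <= i <= n - 1 -> 1 <= j <= n - 1 -> adjacent i j ->
  sb_eq n [Sg j; Sg i; Xg j] [Xg i; Sg j; Sg i].
Proof.
  intros Hi Hj [<-|<-]; apply sb_rel_eq; [apply rel_ssx' | apply rel_ssx]; lia.
Qed.

Lemma sigma_commutes_or_adjacent n i g : 1 <= i <= n - 1 -> valid_gen n g -> g <> Sg i ->
  sb_eq n [Sg i; g] [g; Sg i] \/ adjacent i (gidx g).
Proof.
  unfold valid_gen, adjacent. intros Hi Hg Hne.
  destruct (Nat.eq_dec (i + 1) (gidx g)), (Nat.eq_dec (gidx g + 1) i); [lia|auto..|left].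
  destruct g as [j|j]; simpl in *.
  - apply sb_rel_eq, rel_ss; [lia|lia|]. assert (i <> j) by congruence. lia.
  - symmetry. apply sb_rel_eq, rel_xs; lia.
Qed.

Lemma left_divides_cons_inv n g i Q : g <> Sg i ->
  left_divides n (Sg i) (g :: Q) -> left_divides n (Sg i) Q.
Proof.
  intros Hg [Y HY].
  destruct (sb_eq_cons_inv n _ _ _ _ HY) as [[E _]|[u [v [Z [Ec [E1 _]]]]]]; [contradiction|].
  destruct (compl_sigma_head n g i u v Ec) as [u' ->].
  exists (u' ++ Z). exact E1.
Qed.

Lemma left_divides_braid n i g Q :
  1 <= i <= n - 1 -> 1 <= gidx g <= n - 1 -> adjacent i (gidx g) ->
  left_divides n (Sg (gidx g)) (Sg i :: g :: Q) -> left_divides n (Sg i) Q.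
Proof.
  unfold adjacent. intros Hi Hj Hadj [Y HY]. remember (gidx g) as j eqn:Hgj.
  assert (Eij : sb_compl n (Sg i) (Sg j) = Some ([Sg j; Sg i], [Sg i; Sg j]))
    by (unfold compl; simpl; case_indices; reflexivity).
  destruct (sb_eq_cons_compl n _ _ _ _ _ _ Eij HY) as [Z [HZ _]].
  destruct g as [k|k]; simpl in Hgj; subst k.
  - exists Z. apply (sb_eq_cancel_l n [Sg j]). exact HZ.
  - assert (Ekk : sb_compl n (Xg j) (Sg j) = Some ([Sg j], [Xg j]))
      by (unfold compl; simpl; rewrite code_of_refl; case_indices; reflexivity).
    destruct (sb_eq_cons_compl n _ _ _ _ _ _ Ekk HZ) as [Z1 [HQ HZ1]].
    assert (Eik : sb_compl n (Sg i) (Xg j) = Some ([Sg j; Xg i], [Sg i; Sg j]))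
      by (unfold compl; simpl; case_indices; reflexivity).
    destruct (sb_eq_cons_compl n _ _ _ _ _ _ Eik HZ1) as [Z2 [_ HZ2]].
    exists (Sg j :: Sg i :: Z2). rewrite HQ, HZ2.
    change (sb_eq n ([Sg j; Sg i; Sg j] ++ Z2) ([Sg i; Sg j; Sg i] ++ Z2)).
    rewrite (braid_sigma n i j Hi Hj Hadj). reflexivity.
Qed.

Lemma right_divides_braid n i g :
  1 <= i <= n - 1 -> 1 <= gidx g <= n - 1 -> adjacent i (gidx g) ->
  right_divides n (Sg i) [Sg (gidx g); Sg i; g].
Proof.
  intros Hi Hj Hadj. destruct g as [j|j]; simpl in *.
  - exists [Sg i; Sg j]. exact (braid_sigma n i j Hi Hj Hadj).
  - exists [Xg i; Sg j]. exact (braid_sigma_x n i j Hi Hj Hadj).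
Qed.

Section Factorizations.
Variables (n : nat) (W : word).
Hypothesis W_positive : positive_word n W.
Hypothesis sigma_divides_W : forall i, 1 <= i <= n - 1 -> left_divides n (Sg i) W.

Lemma sigma_divides_factor P : forall Q i, sb_eq n W (P ++ Q) -> 1 <= i <= n - 1 ->
  left_divides n (Sg i) Q \/ right_divides n (Sg i) P.
Proof.
  induction P as [P IH] using (induction_ltof1 _ (@length gen)); unfold ltof in IH.
  intros Q i HW Hi.
  destruct P as [|g P0 _] using rev_ind.
  { left. destruct (sigma_divides_W i Hi) as [D HD]. exists D. rewrite <- HD. symmetry. exact HW. }
  destruct (sameP g (Sg i)) as [->|Hg].
  { right. exists P0. reflexivity. }
  assert (Hgv : valid_gen n g).
  { pose proof (proj1 (sb_eq_positive n _ _ HW) W_positive) as HPQ.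
    unfold positive_word in HPQ. rewrite !Forall_app in HPQ.
    destruct HPQ as [[_ Hgv] _]. inversion Hgv. assumption. }
  rewrite length_app in IH. simpl in IH.
  assert (HW0 : sb_eq n W (P0 ++ g :: Q)) by (rewrite HW, <- app_assoc; reflexivity).
  destruct (IH P0 ltac:(lia) (g :: Q) i HW0 Hi) as [HQ|[P1 HP1]].
  { left. exact (left_divides_cons_inv n g i Q Hg HQ). }
  assert (HP : sb_eq n (P0 ++ [g]) (P1 ++ [Sg i; g])) by (rewrite HP1, <- app_assoc; reflexivity).
  destruct (sigma_commutes_or_adjacent n i g Hi Hgv Hg) as [Hc|Hadj].
  { right. exists (P1 ++ [g]). rewrite HP, <- app_assoc. simpl. rewrite Hc. reflexivity. }
  assert (Hlen := sb_eq_length _ _ _ HP1). rewrite length_app in Hlen. simpl in Hlen.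
  assert (HW1 : sb_eq n W (P1 ++ Sg i :: g :: Q)) by (rewrite HW, HP, <- app_assoc; reflexivity).
  destruct (IH P1 ltac:(lia) (Sg i :: g :: Q) (gidx g) HW1 Hgv) as [HQ|[P2 HP2]].
  - left. exact (left_divides_braid n i g Q Hi Hgv Hadj HQ).
  - right. destruct (right_divides_braid n i g Hi Hgv Hadj) as [w Hw].
    exists (P2 ++ w). rewrite HP, HP2, <- !app_assoc. simpl. rewrite Hw. reflexivity.
Qed.

End Factorizations.

Theorem theorem3p1 (n : nat) (hn : 2 <= n) (W V : word)
  (hW : positive_word n W) (hV : positive_word n V)
  (hWV : sb_eq n W (Delta n ++ V)) :
  forall P : word, node n W P ->
  forall i : nat, 1 <= i <= n - 1 ->
    node n W (P ++ [Sg i]) \/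
    exists P' : word, node n W P' /\ sb_eq n P (P' ++ [Sg i]).
Proof.
  intros P [HP [Q [HQ HW]]] i Hi.
  assert (HDelta : forall k, 1 <= k <= n - 1 -> left_divides n (Sg k) W).
  { intros k Hk. destruct (Delta_left_divisible n k Hk) as [D HD].
    exists (D ++ V). rewrite hWV, HD. reflexivity. }
  assert (Hsi : valid_gen n (Sg i)) by exact Hi.
  destruct (sigma_divides_factor n W hW HDelta P Q i HW Hi) as [[Q' HQ']|[P' HP']].
  - left. split; [apply Forall_app; auto|].
    exists Q'. split.
    + apply (sb_eq_positive n _ _ HQ') in HQ. inversion HQ. assumption.
    + rewrite HW, HQ', <- app_assoc. reflexivity.
  - right. exists P'. split; [|exact HP'].
    apply (sb_eq_positive n _ _ HP'), Forall_app in HP.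
    split; [apply HP|]. exists (Sg i :: Q). split; [constructor; assumption|].
    rewrite HW, HP', <- app_assoc. reflexivity.
Qed.
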